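(* Let $X$ be a finite-dimensional real Banach space with a skipped 1-unconditional basis $(e_k)_{k=1}^{2N+1}$ and biorthogonal functionals $(e_k^* )_{k=1}^{2N+1}$. Suppose $\mathrm{ubc}(e^*_{2j-1})_{j=1}^{N+1}=\mu>1$. Then $\mathrm{ubc}(e_j^* )_{j=1}^{2N+1}\ge 1+2(\mu-1)$.
   Context: A basic sequence $(e_k)_{k=1}^N$ ($1\le N\le\infty$) is skipped $\lambda$-unconditional if whenever $0=m_0<m_1<\dots<m_n<\infty$ with $m_j-m_{j-1}\ge2$ for $1\le j\le n$, and $y_j\in[e_i]_{i=m_{j-1}+1}^{m_j-1}$ (spans taken only over indices $i\le N$), then $\|\sum_{j=1}^n\epsilon_jy_j\|\le\lambda\|\sum_{j=1}^ny_j\|$ for all signs $\epsilon_j=\pm1$. For a finite linearly independent sequence $(f_j)_{j\in A}$, $\mathrm{ubc}(f_j)_{j\in A}$ (unconditional basis constant) is the least $K$ such that $\|\sum_{j\in A}\epsilon_ja_jf_j\|\le K\|\sum_{j\in A}a_jf_j\|$ for all scalars $a_j$ and signs $\epsilon_j=\pm1$. *)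

From Stdlib Require Import Reals.
Open Scope R_scope.

(* A finite-dimensional space X with basis (e_k)_{k=1}^n is modelled, via the
   coordinate isomorphism, as R^n: a vector is a function [nat -> R] of which
   only the coordinates 1..n matter; e_k is the k-th unit vector and the
   biorthogonal functional e_k^star is the k-th coordinate. *)
Definition vec := nat -> R.

Fixpoint sumR (n : nat) (f : nat -> R) : R :=
  match n with
  | O => 0
  | S m => sumR m f + f (S m)
  end.

Definition vadd (x y : vec) : vec := fun k => x k + y k.
Definition vscale (c : R) (x : vec) : vec := fun k => c * x k.
Definition vsum (m : nat) (y : nat -> vec) : vec := fun k => sumR m (fun j => y j k).

Definition is_norm (n : nat) (nrm : vec -> R) : Prop :=
  (forall x y : vec, (forall k, (1 <= k <= n)%nat -> x k = y k) -> nrm x = nrm y) /\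
  (forall x : vec, nrm x = 0 -> forall k, (1 <= k <= n)%nat -> x k = 0) /\
  (forall (c : R) (x : vec), nrm (vscale c x) = Rabs c * nrm x) /\
  (forall x y : vec, nrm (vadd x y) <= nrm x + nrm y).

Definition is_sign (e : R) : Prop := e = 1 \/ e = -1.

Definition skipped_unconditional (n : nat) (nrm : vec -> R) (lam : R) : Prop :=
  forall (m : nat) (mm : nat -> nat) (y : nat -> vec) (eps : nat -> R),
    mm 0%nat = 0%nat ->
    (forall j, (1 <= j <= m)%nat -> (mm (j - 1)%nat + 2 <= mm j)%nat) ->
    (forall j, (1 <= j <= m)%nat -> forall i,
        ~ ((mm (j - 1)%nat < i)%nat /\ (i < mm j)%nat /\ (i <= n)%nat) -> y j i = 0) ->
    (forall j, (1 <= j <= m)%nat -> is_sign (eps j)) ->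
    nrm (vsum m (fun j => vscale (eps j) (y j))) <= lam * nrm (vsum m y).

(* pairing of the functional with coefficients b (i.e. sum_k b_k e_k^star) with x *)
Definition pairing (n : nat) (b x : vec) : R := sumR n (fun k => b k * x k).

Definition is_dualnorm (n : nat) (nrm : vec -> R) (b : vec) (r : R) : Prop :=
  is_lub (fun t => exists x : vec, nrm x <= 1 /\ t = Rabs (pairing n b x)) r.

Definition ubc_bound (n : nat) (nrm : vec -> R) (P : nat -> Prop) (K : R) : Prop :=
  forall (a eps : vec) (r s : R),
    (forall k, ~ P k -> a k = 0) ->
    (forall k, P k -> is_sign (eps k)) ->
    is_dualnorm n nrm (fun k => eps k * a k) r ->
    is_dualnorm n nrm a s ->
    r <= K * s.

Definition ubc_is (n : nat) (nrm : vec -> R) (P : nat -> Prop) (mu : R) : Prop :=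
  ubc_bound n nrm P mu /\ (forall K, ubc_bound n nrm P K -> mu <= K).

Definition odd_idx (n : nat) (k : nat) : Prop := (1 <= k <= n)%nat /\ Nat.odd k = true.
Definition all_idx (n : nat) (k : nat) : Prop := (1 <= k <= n)%nat.

(* Let T flip the signs of the even coordinates.  By duality ||T|| <= K.
   For a functional f supported on odd indices, signs eps and ||x|| <= 1, the
   value of eps.f at x is the value of f at the signed odd part of x; skipped
   1-unconditionality (odd coordinates are separated by skipped even ones) bounds
   its norm by that of the odd part (x + Tx)/2, which is at most (1 + K)/2.  Hence
   mu <= (1 + K)/2, i.e. K >= 2 mu - 1.

   The dual norms of the statement are suprema, so the duality step needs two
   general facts about a norm on R^n, developed first: a finite-dimensional
   Hahn-Banach theorem (norming functionals exist), and the boundedness of the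
   coordinates by the norm (a compactness argument on the cube [-1,1]^n), which
   makes every dual norm exist. *)

From Stdlib Require Import Reals Lra Lia FunctionalExtensionality ClassicalEpsilon.
Open Scope R_scope.

Lemma sumR_ext n f g :
  (forall k, (1 <= k <= n)%nat -> f k = g k) -> sumR n f = sumR n g.
Proof.
  induction n as [|n IH]; simpl; intros H; [reflexivity|].
  rewrite IH, H; [reflexivity | lia | intros; apply H; lia].
Qed.

Lemma sumR_zero n : sumR n (fun _ => 0) = 0.
Proof. induction n as [|n IH]; simpl; [|rewrite IH]; ring. Qed.

Lemma sumR_scale n c f : sumR n (fun k => c * f k) = c * sumR n f.
Proof. induction n as [|n IH]; simpl; [|rewrite IH]; ring. Qed.

Lemma sumR_le n f g :
  (forall k, (1 <= k <= n)%nat -> f k <= g k) -> sumR n f <= sumR n g.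
Proof.
  induction n as [|n IH]; simpl; intros H; [lra|].
  assert (f (S n) <= g (S n)) by (apply H; lia).
  assert (sumR n f <= sumR n g) by (apply IH; intros; apply H; lia).
  lra.
Qed.

Lemma sumR_nonneg n f : (forall k, (1 <= k <= n)%nat -> 0 <= f k) -> 0 <= sumR n f.
Proof. intros H. rewrite <- (sumR_zero n). apply sumR_le, H. Qed.

Lemma sumR_abs n f : Rabs (sumR n f) <= sumR n (fun k => Rabs (f k)).
Proof.
  induction n as [|n IH]; simpl; [rewrite Rabs_R0; lra|].
  eapply Rle_trans; [apply Rabs_triang | lra].
Qed.

Lemma sumR_ge_term n f k :
  (forall j, (1 <= j <= n)%nat -> 0 <= f j) -> (1 <= k <= n)%nat -> f k <= sumR n f.
Proof.
  induction n as [|n IH]; intros H Hk; simpl; [lia|].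
  assert (0 <= sumR n f) by (apply sumR_nonneg; intros; apply H; lia).
  destruct (Nat.eq_dec k (S n)) as [->|Hne]; [lra|].
  assert (0 <= f (S n)) by (apply H; lia).
  assert (f k <= sumR n f) by (apply IH; [intros; apply H|]; lia).
  lra.
Qed.

Lemma sumR_odd_indicator m k c : (1 <= k)%nat ->
  sumR m (fun j => if Nat.eqb k (2 * j - 1) then c else 0)
  = if (Nat.odd k && Nat.leb k (2 * m - 1))%bool then c else 0.
Proof.
  intros Hk. induction m as [|m IH].
  - simpl. destruct (Nat.odd k); simpl; [|reflexivity].
    destruct (Nat.leb_spec k 0); [lia | reflexivity].
  - change (sumR (S m) ?f) with (sumR m f + f (S m)). cbv beta. rewrite IH.
    replace (2 * S m - 1)%nat with (2 * m + 1)%nat by lia.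
    destruct (Nat.Even_or_Odd k) as [[i ->]|[i ->]].
    + replace (Nat.odd (2 * i)) with false
        by (rewrite <- Nat.negb_even, Nat.even_mul; reflexivity).
      destruct (Nat.eqb_spec (2 * i) (2 * m + 1)); [lia | simpl; ring].
    + replace (Nat.odd (2 * i + 1)) with true
        by (rewrite Nat.add_comm, Nat.odd_add_mul_2; reflexivity).
      destruct (Nat.leb_spec (2 * i + 1) (2 * m - 1)), (Nat.leb_spec (2 * i + 1) (2 * m + 1)),
        (Nat.eqb_spec (2 * i + 1) (2 * m + 1)); simpl; lia || ring.
Qed.

Lemma Rabs_le_inv a b : Rabs a <= b -> - b <= a <= b.
Proof. unfold Rabs; destruct (Rcase_abs a); lra. Qed.

Lemma Rabs_m1 : Rabs (-1) = 1.
Proof. rewrite Rabs_left; lra. Qed.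

Ltac vec_eq := let k := fresh "k" in extensionality k; unfold vadd, vscale; ring.

Definition zv : vec := fun _ => 0.

Definition agree (n : nat) (x y : vec) : Prop := forall k, (1 <= k <= n)%nat -> x k = y k.

Definition upd (x : vec) (m : nat) (t : R) : vec := fun k => if Nat.eqb k m then t else x k.

Definition unitv (m : nat) : vec := fun k => if Nat.eqb k m then 1 else 0.

Lemma pairing_scale n b c x : pairing n b (vscale c x) = c * pairing n b x.
Proof. unfold pairing, vscale. rewrite <- sumR_scale. apply sumR_ext; intros; ring. Qed.

(** Sublinear functionals and the Hahn-Banach theorem on [R^n]. *)

Definition sublin (n : nat) (p : vec -> R) : Prop :=
  (forall x y, agree n x y -> p x = p y) /\
  (forall x y, p (vadd x y) <= p x + p y) /\
  (forall c x, 0 <= c -> p (vscale c x) = c * p x).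

Lemma sublin_zero n p : sublin n p -> p zv = 0.
Proof.
  intros [_ [_ Hh]]. replace zv with (vscale 0 zv) by (unfold zv; vec_eq).
  rewrite Hh; lra.
Qed.

Lemma sublin_line_lb n p v t : sublin n p -> t * p v <= p (vscale t v).
Proof.
  intros Hp. assert (H0 := sublin_zero n p Hp). destruct Hp as [_ [Hs Hh]].
  destruct (Rle_dec 0 t); [rewrite Hh; lra|].
  specialize (Hs (vscale t v) (vscale (-t) v)).
  replace (vadd (vscale t v) (vscale (-t) v)) with zv in Hs by (unfold zv; vec_eq).
  rewrite (Hh (-t) v) in Hs by lra. lra.
Qed.

(* A chosen least upper bound (meaningful for nonempty bounded sets). *)
Definition sup_of (E : R -> Prop) : R := epsilon (inhabits 0) (fun m => is_lub E m).

Lemma sup_of_spec E : bound E -> (exists x, E x) -> is_lub E (sup_of E).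
Proof.
  intros Hb He. unfold sup_of. apply epsilon_spec.
  destruct (completeness E Hb He) as [m Hm]. eauto.
Qed.

(* [line_inf p v c x = inf_t (p (x + t v) - t c)]: the largest functional below [p]
   that is affine with slope [c] along [v]; the one-step extension of Hahn-Banach. *)
Definition line_inf (p : vec -> R) (v : vec) (c : R) (x : vec) : R :=
  - sup_of (fun u => exists t, u = t * c - p (vadd x (vscale t v))).

Section LineInf.
Variables (n : nat) (p : vec -> R) (v : vec) (c : R).
Hypothesis Hp : sublin n p.
Hypothesis Hc : forall t, t * c <= p (vscale t v).

Lemma line_inf_spec x :
  is_lub (fun u => exists t, u = t * c - p (vadd x (vscale t v))) (- line_inf p v c x).
Proof.
  unfold line_inf. rewrite Ropp_involutive. apply sup_of_spec.
  - exists (p (vscale (-1) x)). intros u [t ->].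
    destruct Hp as [_ [Hs _]]. specialize (Hc t).
    specialize (Hs (vadd x (vscale t v)) (vscale (-1) x)).
    replace (vadd (vadd x (vscale t v)) (vscale (-1) x)) with (vscale t v) in Hs by vec_eq.
    lra.
  - eexists; exists 0; reflexivity.
Qed.

Lemma line_inf_lb x t : line_inf p v c x <= p (vadd x (vscale t v)) - t * c.
Proof.
  destruct (line_inf_spec x) as [H _].
  assert (H1 := H _ (ex_intro _ t eq_refl)). lra.
Qed.

Lemma line_inf_glb x L :
  (forall t, L <= p (vadd x (vscale t v)) - t * c) -> L <= line_inf p v c x.
Proof.
  intros HL. destruct (line_inf_spec x) as [_ H].
  assert (- line_inf p v c x <= - L); [|lra].
  apply H. intros u [t ->]. specialize (HL t). lra.
Qed.

Lemma line_inf_le x : line_inf p v c x <= p x.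
Proof.
  eapply Rle_trans; [apply (line_inf_lb x 0)|].
  replace (vadd x (vscale 0 v)) with x by vec_eq. lra.
Qed.

Lemma line_inf_zero : line_inf p v c zv = 0.
Proof.
  apply Rle_antisym.
  - eapply Rle_trans; [apply line_inf_le|]. rewrite (sublin_zero n p Hp); lra.
  - apply line_inf_glb. intros t.
    replace (vadd zv (vscale t v)) with (vscale t v) by (unfold zv; vec_eq).
    specialize (Hc t). lra.
Qed.

Lemma line_inf_shift x s : line_inf p v c (vadd x (vscale s v)) = line_inf p v c x + s * c.
Proof.
  apply Rle_antisym.
  - cut (line_inf p v c (vadd x (vscale s v)) - s * c <= line_inf p v c x); [lra|].
    apply line_inf_glb. intros u. assert (H := line_inf_lb (vadd x (vscale s v)) (u - s)).
    replace (vadd (vadd x (vscale s v)) (vscale (u - s) v)) with (vadd x (vscale u v))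
      in H by vec_eq.
    lra.
  - apply line_inf_glb. intros t. assert (H := line_inf_lb x (s + t)).
    replace (vadd (vadd x (vscale s v)) (vscale t v)) with (vadd x (vscale (s + t) v))
      by vec_eq.
    lra.
Qed.

Lemma line_inf_agree x y : agree n x y -> line_inf p v c x = line_inf p v c y.
Proof.
  assert (Hle : forall x y, agree n x y -> line_inf p v c x <= line_inf p v c y).
  { intros x' y' Hxy. apply line_inf_glb. intros t.
    destruct Hp as [Ha _]. rewrite <- (Ha (vadd x' (vscale t v))); [apply line_inf_lb|].
    intros k Hk. unfold vadd. rewrite (Hxy k Hk). reflexivity. }
  intros Hxy. apply Rle_antisym; apply Hle; [|intros k Hk; symmetry]; auto.
Qed.

Lemma line_inf_subadd x y :
  line_inf p v c (vadd x y) <= line_inf p v c x + line_inf p v c y.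
Proof.
  destruct Hp as [_ [Hs _]].
  cut (line_inf p v c (vadd x y) - line_inf p v c x <= line_inf p v c y); [lra|].
  apply line_inf_glb. intros t.
  cut (line_inf p v c (vadd x y) - (p (vadd y (vscale t v)) - t * c) <= line_inf p v c x);
    [lra|].
  apply line_inf_glb. intros s.
  assert (H1 := line_inf_lb (vadd x y) (s + t)).
  assert (H2 := Hs (vadd x (vscale s v)) (vadd y (vscale t v))).
  replace (vadd (vadd x (vscale s v)) (vadd y (vscale t v)))
    with (vadd (vadd x y) (vscale (s + t) v)) in H2 by vec_eq.
  lra.
Qed.

Lemma line_inf_homog l x : 0 <= l -> line_inf p v c (vscale l x) = l * line_inf p v c x.
Proof.
  intros Hl. destruct Hp as [_ [_ Hh]].
  destruct (Req_dec l 0) as [->|Hl0].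
  { replace (vscale 0 x) with zv by (unfold zv; vec_eq). rewrite line_inf_zero; ring. }
  apply Rle_antisym.
  - cut (line_inf p v c (vscale l x) * / l <= line_inf p v c x).
    { intros H. apply (Rmult_le_compat_l l) in H; [|lra].
      rewrite <- Rmult_assoc, (Rmult_comm l), Rmult_assoc, Rinv_r, Rmult_1_r in H; lra. }
    apply line_inf_glb. intros t. assert (H := line_inf_lb (vscale l x) (l * t)).
    replace (vadd (vscale l x) (vscale (l * t) v)) with (vscale l (vadd x (vscale t v)))
      in H by vec_eq.
    rewrite Hh in H by lra.
    apply (Rmult_le_reg_l l); [lra|].
    rewrite (Rmult_comm _ (/ l)), <- Rmult_assoc, Rinv_r, Rmult_1_l by lra. lra.
  - apply line_inf_glb. intros t. assert (H := line_inf_lb x (t / l)).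
    replace (vadd (vscale l x) (vscale t v)) with (vscale l (vadd x (vscale (t / l) v)))
      by (extensionality k; unfold vadd, vscale; field; lra).
    rewrite Hh by lra. apply (Rmult_le_compat_l l) in H; [|lra].
    replace (l * (p (vadd x (vscale (t / l) v)) - t / l * c))
      with (l * p (vadd x (vscale (t / l) v)) - t * c) in H by (field; lra).
    lra.
Qed.

Lemma line_inf_sublin : sublin n (line_inf p v c).
Proof.
  split; [exact line_inf_agree | split; [exact line_inf_subadd | exact line_inf_homog]].
Qed.

End LineInf.

Lemma sublin_restrict n q : sublin (S n) q -> sublin n (fun x => q (upd x (S n) 0)).
Proof.
  intros [Ha [Hs Hh]]. split; [|split].
  - intros x y Hxy. apply Ha. intros k Hk. unfold upd.
    destruct (Nat.eqb_spec k (S n)); [reflexivity | apply Hxy; lia].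
  - intros x y. eapply Rle_trans; [|apply Hs]. right. f_equal.
    extensionality k; unfold upd, vadd. destruct (Nat.eqb k (S n)); ring.
  - intros l x Hl. rewrite <- Hh by exact Hl. f_equal.
    extensionality k; unfold upd, vscale. destruct (Nat.eqb k (S n)); ring.
Qed.

(* Hahn-Banach on [R^n]: every sublinear functional dominates a linear one.
   Induction on [n], extending along [e_(n+1)] with slope [p e_(n+1)]. *)
Lemma dominated_functional n : forall p, sublin n p ->
  exists b : vec, forall x, pairing n b x <= p x.
Proof.
  induction n as [|n IH]; intros p Hp.
  - exists zv. intros x. unfold pairing; simpl.
    destruct Hp as [Ha Hrest]. rewrite (Ha x zv) by (intros k Hk; lia).
    rewrite (sublin_zero 0 p (conj Ha Hrest)). lra.
  - set (e := unitv (S n)). set (c := p e).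
    assert (Hc : forall t, t * c <= p (vscale t e)) by (intros; apply (sublin_line_lb (S n)); auto).
    assert (Hq := sublin_restrict n _ (line_inf_sublin (S n) p e c Hp Hc)).
    destruct (IH _ Hq) as [b' Hb'].
    exists (fun k => if Nat.eqb k (S n) then c else b' k). intros x.
    assert (Hsplit : x = vadd (upd x (S n) 0) (vscale (x (S n)) e)).
    { extensionality k; unfold vadd, vscale, upd, e, unitv.
      destruct (Nat.eqb_spec k (S n)); subst; ring. }
    assert (H1 := line_inf_shift (S n) p e c Hp Hc (upd x (S n) 0) (x (S n))).
    rewrite <- Hsplit in H1.
    assert (H2 := line_inf_le (S n) p e c Hp Hc x).
    specialize (Hb' x). unfold pairing in *; simpl. rewrite Nat.eqb_refl.
    rewrite (sumR_ext n _ (fun k => b' k * x k));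
      [lra | intros k Hk; destruct (Nat.eqb_spec k (S n)); [lia | reflexivity]].
Qed.

Lemma norming_functional n p z : sublin n p ->
  exists b : vec, (forall x, pairing n b x <= p x) /\ pairing n b z = p z.
Proof.
  intros Hp.
  assert (Hc : forall t, t * p z <= p (vscale t z)) by (intros; apply (sublin_line_lb n); auto).
  destruct (dominated_functional n _ (line_inf_sublin n p z (p z) Hp Hc)) as [b Hb].
  exists b. split.
  - intros x. eapply Rle_trans; [apply Hb | apply (line_inf_le n); auto].
  - assert (H1 := Hb (vscale (-1) z)). rewrite pairing_scale in H1.
    assert (H2 := line_inf_shift n p z (p z) Hp Hc zv (-1)).
    replace (vadd zv (vscale (-1) z)) with (vscale (-1) z) in H2 by (unfold zv; vec_eq).
    rewrite (line_inf_zero n) in H2 by auto.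
    assert (H3 := Hb z). assert (H4 := line_inf_le n p z (p z) Hp Hc z). lra.
Qed.

Section Norm.
Variables (n : nat) (nrm : vec -> R).
Hypothesis Hn : is_norm n nrm.

Lemma nrm_agree x y : agree n x y -> nrm x = nrm y.
Proof. apply (proj1 Hn). Qed.

Lemma nrm_eq0 x : nrm x = 0 -> forall k, (1 <= k <= n)%nat -> x k = 0.
Proof. apply (proj1 (proj2 Hn)). Qed.

Lemma nrm_scale c x : nrm (vscale c x) = Rabs c * nrm x.
Proof. apply (proj1 (proj2 (proj2 Hn))). Qed.

Lemma nrm_tri x y : nrm (vadd x y) <= nrm x + nrm y.
Proof. apply (proj2 (proj2 (proj2 Hn))). Qed.

Lemma nrm_zv : nrm zv = 0.
Proof.
  replace zv with (vscale 0 zv) by (unfold zv; vec_eq).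
  rewrite nrm_scale, Rabs_R0; ring.
Qed.

Lemma nrm_nonneg x : 0 <= nrm x.
Proof.
  assert (H := nrm_tri x (vscale (-1) x)).
  replace (vadd x (vscale (-1) x)) with zv in H by (unfold zv; vec_eq).
  rewrite nrm_zv, nrm_scale, Rabs_m1 in H. lra.
Qed.

Lemma nrm_sublin : sublin n nrm.
Proof.
  split; [exact nrm_agree | split; [exact nrm_tri|]].
  intros c x Hc. rewrite nrm_scale, Rabs_pos_eq; auto.
Qed.

Lemma norming_nrm z :
  exists b, (forall x, Rabs (pairing n b x) <= nrm x) /\ pairing n b z = nrm z.
Proof.
  destruct (norming_functional n nrm z nrm_sublin) as [b [H1 H2]].
  exists b; split; [|exact H2].
  intros x. apply Rabs_le. split; [|apply H1].
  assert (H := H1 (vscale (-1) x)).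
  rewrite pairing_scale, nrm_scale, Rabs_m1 in H. lra.
Qed.

Definition Lnrm : R := sumR n (fun k => nrm (unitv k)).

Lemma nrm_le_l1 d : nrm d <= Lnrm * sumR n (fun k => Rabs (d k)).
Proof.
  set (trunc j := fun k => if Nat.leb k j then d k else 0).
  assert (Htrunc : forall j, nrm (trunc j) <= sumR j (fun k => Rabs (d k) * nrm (unitv k))).
  { induction j as [|j IH]; simpl.
    - rewrite (nrm_agree _ zv), nrm_zv; [lra|].
      intros k Hk; unfold trunc, zv. destruct (Nat.leb_spec k 0); [lia | reflexivity].
    - replace (trunc (S j)) with (vadd (trunc j) (vscale (d (S j)) (unitv (S j)))).
      + eapply Rle_trans; [apply nrm_tri|]. rewrite nrm_scale. lra.
      + extensionality k; unfold vadd, vscale, trunc, unitv.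
        destruct (Nat.leb_spec k j), (Nat.leb_spec k (S j)), (Nat.eqb_spec k (S j));
          try lia; subst; ring. }
  rewrite (nrm_agree d (trunc n));
    [|intros k Hk; unfold trunc; destruct (Nat.leb_spec k n); [reflexivity | lia]].
  eapply Rle_trans; [apply Htrunc|]. unfold Lnrm. rewrite <- sumR_scale. apply sumR_le.
  intros k Hk. rewrite Rmult_comm. apply Rmult_le_compat_r; [apply Rabs_pos|].
  apply (sumR_ge_term n (fun k => nrm (unitv k))); auto. intros; apply nrm_nonneg.
Qed.

Lemma Lnrm_nonneg : 0 <= Lnrm.
Proof. apply sumR_nonneg; intros; apply nrm_nonneg. Qed.

Lemma nrm_lipschitz x y : Rabs (nrm x - nrm y) <= Lnrm * sumR n (fun k => Rabs (x k - y k)).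
Proof.
  assert (Hdiff : forall x y, nrm x - nrm y <= Lnrm * sumR n (fun k => Rabs (x k - y k))).
  { intros x' y'. assert (H := nrm_tri (vadd x' (vscale (-1) y')) y').
    replace (vadd (vadd x' (vscale (-1) y')) y') with x' in H by vec_eq.
    assert (H1 := nrm_le_l1 (vadd x' (vscale (-1) y'))).
    rewrite (sumR_ext n _ (fun k => Rabs (x' k - y' k))) in H1
      by (intros; unfold vadd, vscale; f_equal; ring).
    lra. }
  apply Rabs_le. split; [|apply Hdiff].
  rewrite (sumR_ext n _ (fun k => Rabs (y k - x k))) by (intros; apply Rabs_minus_sym).
  specialize (Hdiff y x). lra.
Qed.

End Norm.

(** Compactness: a Lipschitz function attains its minimum on the cube [[-1,1]^m]. *)

Definition lipschitz (m : nat) (L : R) (F : vec -> R) : Prop :=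
  forall x y, Rabs (F x - F y) <= L * sumR m (fun k => Rabs (x k - y k)).

Definition inbox (m : nat) (x : vec) : Prop := forall k, (1 <= k <= m)%nat -> -1 <= x k <= 1.

Lemma lipschitz_continuity (f : R -> R) L :
  0 <= L -> (forall s t, Rabs (f s - f t) <= L * Rabs (s - t)) -> forall x, continuity_pt f x.
Proof.
  intros HL Hf x eps He. exists (eps / (L + 1)). split; [apply Rdiv_lt_0_compat; lra|].
  intros y [_ Hy]. simpl in *. unfold R_dist in *.
  eapply Rle_lt_trans; [apply Hf|].
  apply Rle_lt_trans with (L * (eps / (L + 1))); [apply Rmult_le_compat_l; lra|].
  apply Rmult_lt_reg_r with (L + 1); [lra|].
  unfold Rdiv. rewrite Rmult_assoc, Rmult_assoc, Rinv_l by lra. nra.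
Qed.

Lemma sumR_upd m x y t s :
  sumR (S m) (fun k => Rabs (upd x (S m) t k - upd y (S m) s k))
  = sumR m (fun k => Rabs (x k - y k)) + Rabs (t - s).
Proof.
  simpl. unfold upd at 3 4. rewrite Nat.eqb_refl. f_equal. apply sumR_ext.
  intros k Hk. unfold upd. destruct (Nat.eqb_spec k (S m)); [lia | reflexivity].
Qed.

Lemma min_last_coordinate m L F : 0 <= L -> lipschitz (S m) L F ->
  exists ts : vec -> R, forall x, -1 <= ts x <= 1 /\
    forall c, -1 <= c <= 1 -> F (upd x (S m) (ts x)) <= F (upd x (S m) c).
Proof.
  intros HL HF.
  assert (Hmin : forall x, exists t, (forall c, -1 <= c <= 1 ->
      F (upd x (S m) t) <= F (upd x (S m) c)) /\ -1 <= t <= 1).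
  { intros x. apply (continuity_ab_min (fun t => F (upd x (S m) t))); [lra|].
    intros c _. apply (lipschitz_continuity _ L HL). intros s t.
    eapply Rle_trans; [apply HF|].
    rewrite sumR_upd, (sumR_ext m _ (fun _ => 0)), sumR_zero;
      [lra | intros; rewrite Rminus_diag, Rabs_R0; reflexivity]. }
  exists (fun x => proj1_sig (constructive_indefinite_description _ (Hmin x))).
  intros x. destruct (constructive_indefinite_description _ (Hmin x)) as [t [Ht1 Ht2]].
  simpl. auto.
Qed.

Lemma min_last_coordinate_lipschitz m L F (ts : vec -> R) : lipschitz (S m) L F ->
  (forall x, -1 <= ts x <= 1 /\
    forall c, -1 <= c <= 1 -> F (upd x (S m) (ts x)) <= F (upd x (S m) c)) ->
  lipschitz m L (fun x => F (upd x (S m) (ts x))).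
Proof.
  intros HF Hts.
  assert (Hle : forall x y, F (upd x (S m) (ts x))
            <= F (upd y (S m) (ts y)) + L * sumR m (fun k => Rabs (x k - y k))).
  { intros x y. destruct (Hts x) as [_ H1]. destruct (Hts y) as [H2 _].
    specialize (H1 (ts y) H2). specialize (HF (upd x (S m) (ts y)) (upd y (S m) (ts y))).
    rewrite sumR_upd, Rminus_diag, Rabs_R0, Rplus_0_r in HF.
    apply Rabs_le_inv in HF. lra. }
  intros x y. apply Rabs_le. split; [|specialize (Hle x y); lra].
  specialize (Hle y x).
  rewrite (sumR_ext m _ (fun k => Rabs (x k - y k))) in Hle by (intros; apply Rabs_minus_sym).
  lra.
Qed.

Lemma box_minimum m : forall F L, 0 <= L -> lipschitz m L F ->
  exists x0, inbox m x0 /\ forall x, inbox m x -> F x0 <= F x.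
Proof.
  induction m as [|m IH]; intros F L HL HF.
  - exists zv. split; [intros k Hk; lia|]. intros x _.
    specialize (HF zv x). simpl in HF. rewrite Rmult_0_r in HF.
    apply Rabs_le_inv in HF. lra.
  - destruct (min_last_coordinate m L F HL HF) as [ts Hts].
    destruct (IH _ L HL (min_last_coordinate_lipschitz m L F ts HF Hts)) as [x0 [Hx0 Hmin]].
    exists (upd x0 (S m) (ts x0)). split.
    + intros k Hk. unfold upd. destruct (Nat.eqb_spec k (S m)); [apply Hts | apply Hx0; lia].
    + intros x Hx. eapply Rle_trans; [apply (Hmin x); intros k Hk; apply Hx; lia|].
      eapply Rle_trans; [apply (proj2 (Hts x) (x (S m))); apply Hx; lia|].
      right. f_equal. extensionality k. unfold upd.
      destruct (Nat.eqb_spec k (S m)); subst; reflexivity.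
Qed.

(** Coordinates are bounded by the norm, hence dual norms exist. *)

Lemma max_coordinate n x : (1 <= n)%nat ->
  exists j, (1 <= j <= n)%nat /\ forall k, (1 <= k <= n)%nat -> Rabs (x k) <= Rabs (x j).
Proof.
  induction n as [|n IH]; intros Hn; [lia|].
  destruct (Nat.eq_dec n 0) as [->|Hn0].
  - exists 1%nat. split; [lia|]. intros k Hk. replace k with 1%nat by lia. lra.
  - destruct (IH ltac:(lia)) as [j [Hj Hm]].
    destruct (Rle_dec (Rabs (x j)) (Rabs (x (S n)))).
    + exists (S n). split; [lia|]. intros k Hk.
      destruct (Nat.eq_dec k (S n)) as [->|]; [lra|]. specialize (Hm k ltac:(lia)); lra.
    + exists j. split; [lia|]. intros k Hk.
      destruct (Nat.eq_dec k (S n)) as [->|]; [lra | apply Hm; lia].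
Qed.

Lemma uniform_bound n (Q : nat -> R -> Prop) :
  (forall j C C', C <= C' -> Q j C -> Q j C') ->
  (forall j, (1 <= j <= n)%nat -> exists C, 0 <= C /\ Q j C) ->
  exists C, 0 <= C /\ forall j, (1 <= j <= n)%nat -> Q j C.
Proof.
  intros Hmono. induction n as [|n IH]; intros HQ.
  - exists 0. split; [lra | intros; lia].
  - destruct IH as [C [HC HCj]]; [intros; apply HQ; lia|].
    destruct (HQ (S n) ltac:(lia)) as [C' [HC' HC'j]].
    exists (Rmax C C'). split; [apply (Rle_trans _ C); [lra | apply Rmax_l]|].
    intros j Hj. destruct (Nat.eq_dec j (S n)) as [->|].
    + apply (Hmono _ C'); [apply Rmax_r | exact HC'j].
    + apply (Hmono _ C); [apply Rmax_l | apply HCj; lia].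
Qed.

Section Coordinates.
Variables (n : nat) (nrm : vec -> R).
Hypothesis Hn : is_norm n nrm.

(* If [x_j] is a largest coordinate, then [|x_j| <= C ||x||]: minimize the norm over
   the compact set of vectors in the cube with [j]-th coordinate 1. *)
Lemma max_coordinate_bound j : (1 <= j <= n)%nat -> exists C, 0 <= C /\
  forall x, (forall k, (1 <= k <= n)%nat -> Rabs (x k) <= Rabs (x j)) ->
    Rabs (x j) <= C * nrm x.
Proof.
  intros Hj. set (F := fun y => nrm (upd y j 1)).
  assert (HF : lipschitz n (Lnrm n nrm) F).
  { intros x y. unfold F. eapply Rle_trans; [apply (nrm_lipschitz n nrm Hn)|].
    apply Rmult_le_compat_l; [apply (Lnrm_nonneg n nrm Hn)|]. apply sumR_le.
    intros k Hk. unfold upd. destruct (Nat.eqb k j); [|lra].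
    rewrite Rminus_diag, Rabs_R0; apply Rabs_pos. }
  destruct (box_minimum n F _ (Lnrm_nonneg n nrm Hn) HF) as [y0 [Hy0 Hmin]].
  assert (Hpos : 0 < F y0).
  { destruct (Rle_lt_or_eq_dec 0 (F y0)) as [|E]; [apply (nrm_nonneg n nrm Hn) | auto|].
    assert (H := nrm_eq0 n nrm Hn _ (eq_sym E) j Hj). unfold upd in H.
    rewrite Nat.eqb_refl in H. lra. }
  exists (/ F y0). split; [left; apply Rinv_0_lt_compat; exact Hpos|].
  intros x Hx. destruct (Req_dec (x j) 0) as [E|E].
  { rewrite E, Rabs_R0. apply Rmult_le_pos; [left; apply Rinv_0_lt_compat; lra|].
    apply (nrm_nonneg n nrm Hn). }
  assert (Hxj : 0 < Rabs (x j)) by (apply Rabs_pos_lt; exact E).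
  set (y := vscale (/ x j) x).
  assert (Hy : inbox n y).
  { intros k Hk. apply Rabs_le_inv. unfold y, vscale. rewrite Rabs_mult, Rabs_inv.
    apply Rmult_le_reg_l with (Rabs (x j)); [exact Hxj|].
    rewrite <- Rmult_assoc, Rinv_r, Rmult_1_l, Rmult_1_r by lra. apply Hx, Hk. }
  assert (Hyj : F y = nrm x / Rabs (x j)).
  { unfold F. replace (upd y j 1) with y.
    - unfold y. rewrite (nrm_scale n nrm Hn), Rabs_inv. unfold Rdiv. ring.
    - extensionality k. unfold upd, y, vscale. destruct (Nat.eqb_spec k j); subst; [|reflexivity].
      field; exact E. }
  specialize (Hmin y Hy). rewrite Hyj in Hmin.
  apply (Rmult_le_reg_l (F y0)); [exact Hpos|].
  rewrite <- Rmult_assoc, Rinv_r, Rmult_1_l by lra.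
  apply (Rmult_le_compat_r (Rabs (x j))) in Hmin; [|lra].
  unfold Rdiv in Hmin. rewrite Rmult_assoc, Rinv_l, Rmult_1_r in Hmin by lra. exact Hmin.
Qed.

Lemma coord_bound : exists C, 0 <= C /\
  forall x k, (1 <= k <= n)%nat -> Rabs (x k) <= C * nrm x.
Proof.
  destruct (uniform_bound n (fun j C => forall x,
      (forall k, (1 <= k <= n)%nat -> Rabs (x k) <= Rabs (x j)) -> Rabs (x j) <= C * nrm x))
    as [C [HC HCj]].
  - intros j C C' HCC' H x Hx. eapply Rle_trans; [apply H, Hx|].
    apply Rmult_le_compat_r; [apply (nrm_nonneg n nrm Hn) | exact HCC'].
  - exact max_coordinate_bound.
  - exists C. split; [exact HC|]. intros x k Hk.
    destruct (max_coordinate n x ltac:(lia)) as [j [Hj Hmx]].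
    eapply Rle_trans; [apply Hmx, Hk | apply HCj; auto].
Qed.

Lemma dual_exists b : exists s, is_dualnorm n nrm b s.
Proof.
  destruct coord_bound as [C [HC HCx]].
  set (E := fun t => exists x : vec, nrm x <= 1 /\ t = Rabs (pairing n b x)).
  destruct (completeness E) as [s Hs]; [| |exists s; exact Hs].
  - exists (sumR n (fun k => Rabs (b k)) * C). intros t [x [Hx ->]].
    eapply Rle_trans; [apply sumR_abs|].
    rewrite Rmult_comm, <- sumR_scale. apply sumR_le. intros k Hk.
    rewrite Rabs_mult, (Rmult_comm C). apply Rmult_le_compat_l; [apply Rabs_pos|].
    assert (0 <= nrm x) by apply (nrm_nonneg n nrm Hn).
    specialize (HCx x k Hk). nra.
  - exists (Rabs (pairing n b zv)), zv. split; [rewrite (nrm_zv n nrm Hn); lra | reflexivity].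
Qed.

Lemma dual_nonneg b s : is_dualnorm n nrm b s -> 0 <= s.
Proof.
  intros [H _]. eapply Rle_trans; [apply (Rabs_pos (pairing n b zv))|].
  apply H. exists zv. split; [rewrite (nrm_zv n nrm Hn); lra | reflexivity].
Qed.

Lemma dual_bound b s x : is_dualnorm n nrm b s -> Rabs (pairing n b x) <= s * nrm x.
Proof.
  intros Hs. assert (H0 := dual_nonneg b s Hs). destruct Hs as [Hs _].
  destruct (Req_dec (nrm x) 0) as [E|E].
  - rewrite E, Rmult_0_r. unfold pairing.
    rewrite (sumR_ext n _ (fun _ => 0)), sumR_zero, Rabs_R0; [lra|].
    intros k Hk. rewrite (nrm_eq0 n nrm Hn x E k Hk). ring.
  - assert (Hp : 0 < nrm x) by (destruct (nrm_nonneg n nrm Hn x); lra).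
    assert (Hi : 0 < / nrm x) by (apply Rinv_0_lt_compat; exact Hp).
    assert (H1 : / nrm x * Rabs (pairing n b x) <= s).
    { apply Hs. exists (vscale (/ nrm x) x). split.
      - rewrite (nrm_scale n nrm Hn), Rabs_pos_eq, Rinv_l; lra.
      - rewrite pairing_scale, Rabs_mult, (Rabs_pos_eq (/ nrm x)); lra. }
    apply (Rmult_le_compat_l (nrm x)) in H1; [|lra].
    rewrite <- Rmult_assoc, Rinv_r, Rmult_1_l in H1 by lra. lra.
Qed.

End Coordinates.

Definition sign_mult (sg x : vec) : vec := fun k => sg k * x k.

Definition odd_part (c : vec) : vec := fun k => if Nat.odd k then c k else 0.

(* By duality, sign changes of the basis cost at most the unconditional constant
   [K] of the biorthogonal functionals. *)
Lemma sign_mult_bound n nrm K sg x : is_norm n nrm ->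
  ubc_bound n nrm (all_idx n) K -> (forall k, is_sign (sg k)) ->
  nrm (sign_mult sg x) <= Rmax K 0 * nrm x.
Proof.
  intros Hn HK Hsg.
  destruct (norming_nrm n nrm Hn (sign_mult sg x)) as [g [Hg1 Hg2]].
  set (a := fun k => if (Nat.leb 1 k && Nat.leb k n)%bool then g k else 0).
  assert (Hpa : forall y, pairing n a y = pairing n g y).
  { intros y. apply sumR_ext. intros k Hk. unfold a.
    destruct (Nat.leb_spec 1 k), (Nat.leb_spec k n); simpl; lia || reflexivity. }
  destruct (dual_exists n nrm Hn a) as [s Hs].
  destruct (dual_exists n nrm Hn (fun k => sg k * a k)) as [r Hr].
  assert (Hrs : r <= K * s).
  { apply (HK a sg r s); auto. intros k Hk. unfold a, all_idx in *.
    destruct (Nat.leb_spec 1 k), (Nat.leb_spec k n); simpl; auto. lia. }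
  assert (Hs1 : s <= 1).
  { apply (proj2 Hs). intros t [y [Hy ->]]. rewrite Hpa. eapply Rle_trans; [apply Hg1 | exact Hy]. }
  assert (Hdual : nrm (sign_mult sg x) = pairing n (fun k => sg k * a k) x).
  { rewrite <- Hg2, <- Hpa. apply sumR_ext. intros k Hk. unfold sign_mult. ring. }
  assert (Hb := Rabs_le_inv _ _ (dual_bound n nrm Hn _ _ x Hr)).
  assert (0 <= nrm x) by apply (nrm_nonneg n nrm Hn).
  assert (0 <= r) by apply (dual_nonneg n nrm Hn _ _ Hr).
  assert (0 <= s) by apply (dual_nonneg n nrm Hn _ _ Hs).
  assert (r <= Rmax K 0).
  { unfold Rmax. destruct (Rle_dec K 0); nra. }
  rewrite Hdual. nra.
Qed.

Lemma odd_blocks_sum N (c : vec) :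
  agree (2 * N + 1) (vsum (N + 1) (fun j i => if Nat.eqb i (2 * j - 1) then c i else 0))
    (odd_part c).
Proof.
  intros k Hk. unfold vsum, odd_part. cbv beta.
  rewrite sumR_odd_indicator by lia.
  destruct (Nat.odd k); [rewrite Bool.andb_true_l | reflexivity].
  destruct (Nat.leb_spec k (2 * (N + 1) - 1)); [reflexivity | lia].
Qed.

(* The odd coordinates are separated by the skipped even ones, so by skipped
   1-unconditionality, changing signs on odd coordinates does not increase the norm. *)
Lemma odd_part_signs N nrm (c eps : vec) : is_norm (2 * N + 1) nrm ->
  skipped_unconditional (2 * N + 1) nrm 1 ->
  (forall k, odd_idx (2 * N + 1) k -> is_sign (eps k)) ->
  nrm (odd_part (sign_mult eps c)) <= nrm (odd_part c).
Proof.
  intros Hn Hskip Heps.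
  set (y := fun (j : nat) (i : nat) => if Nat.eqb i (2 * j - 1) then c i else 0).
  assert (Hsigned : vsum (N + 1) (fun j => vscale (eps (2 * j - 1)%nat) (y j))
    = vsum (N + 1) (fun j i => if Nat.eqb i (2 * j - 1) then sign_mult eps c i else 0)).
  { f_equal. extensionality j. extensionality i. unfold vscale, y, sign_mult.
    destruct (Nat.eqb_spec i (2 * j - 1)); subst; ring. }
  rewrite <- (nrm_agree _ _ Hn _ _ (odd_blocks_sum N c)),
    <- (nrm_agree _ _ Hn _ _ (odd_blocks_sum N _)), <- Hsigned.
  assert (Hblocks :=
    Hskip (N + 1)%nat (fun j => 2 * j)%nat y (fun j => eps (2 * j - 1)%nat) eq_refl).
  rewrite Rmult_1_l in Hblocks. apply Hblocks.
  - intros j Hj. lia.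
  - intros j Hj i Hi. unfold y. destruct (Nat.eqb_spec i (2 * j - 1)); [|reflexivity].
    exfalso; apply Hi. lia.
  - intros j Hj. apply Heps. split; [lia|].
    replace (2 * j - 1)%nat with (1 + 2 * (j - 1))%nat by lia. apply Nat.odd_add_mul_2.
Qed.

(* For [||x|| <= 1],
   pairing [sum_(k odd) eps_k a_k e_k*] with [x] is pairing [sum a_k e_k*] with the
   signed odd part of [x], whose norm is at most that of the odd part
   [(x + Tx) / 2], where [T] flips the signs of the even coordinates. *)
Lemma odd_ubc_bound N nrm K : is_norm (2 * N + 1) nrm ->
  skipped_unconditional (2 * N + 1) nrm 1 ->
  ubc_bound (2 * N + 1) nrm (all_idx (2 * N + 1)) K ->
  ubc_bound (2 * N + 1) nrm (odd_idx (2 * N + 1)) ((1 + Rmax K 0) / 2).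
Proof.
  intros Hn Hskip HK a eps r s Ha Heps Hr Hs.
  apply (proj2 Hr). intros t [x [Hx ->]].
  assert (Hpair : pairing (2 * N + 1) (fun k => eps k * a k) x
                  = pairing (2 * N + 1) a (odd_part (sign_mult eps x))).
  { apply sumR_ext. intros k Hk. unfold odd_part, sign_mult.
    destruct (Nat.odd k) eqn:Hodd; [ring|].
    rewrite Ha; [ring | intros [_ Hodd']; congruence]. }
  set (T := sign_mult (fun k => if Nat.odd k then 1 else -1)).
  assert (Hhalf : odd_part x = vscale (/ 2) (vadd x (T x))).
  { extensionality k. unfold odd_part, T, sign_mult, vscale, vadd.
    destruct (Nat.odd k); field. }
  assert (HT : nrm (T x) <= Rmax K 0 * nrm x).
  { apply (sign_mult_bound _ _ _ _ _ Hn HK). intros k. unfold is_sign.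
    destruct (Nat.odd k); auto. }
  assert (Hodd : nrm (odd_part x) <= (1 + Rmax K 0) / 2).
  { rewrite Hhalf, (nrm_scale _ _ Hn), Rabs_pos_eq by lra.
    assert (H := nrm_tri _ _ Hn x (T x)). assert (0 <= Rmax K 0) by apply Rmax_r.
    assert (0 <= nrm x) by apply (nrm_nonneg _ _ Hn). nra. }
  assert (Hsigns := odd_part_signs N nrm x eps Hn Hskip Heps).
  assert (0 <= s) by apply (dual_nonneg _ _ Hn _ _ Hs).
  rewrite Hpair. eapply Rle_trans; [apply (dual_bound _ _ Hn _ _ _ Hs)|].
  rewrite (Rmult_comm _ s). apply Rmult_le_compat_l; lra.
Qed.

Theorem lemma5p2 (N : nat) (nrm : vec -> R)
  (Hnorm : is_norm (2 * N + 1) nrm)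
  (Hskip : skipped_unconditional (2 * N + 1) nrm 1)
  (mu : R)
  (Hmu : ubc_is (2 * N + 1) nrm (odd_idx (2 * N + 1)) mu)
  (Hmu1 : 1 < mu) :
  forall K : R, ubc_is (2 * N + 1) nrm (all_idx (2 * N + 1)) K ->
    1 + 2 * (mu - 1) <= K.
Proof.
  intros K [HK _].
  assert (Hle := proj2 Hmu _ (odd_ubc_bound N nrm K Hnorm Hskip HK)).
  (* as [mu > 1], the constant [K] is positive, so [Rmax K 0 = K] *)
  unfold Rmax in Hle. destruct (Rle_dec K 0); lra.
Qed.
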